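(* Let $X,Y$ be Banach spaces, $\bar x\in X$, and let $A\in\mathcal L(X,Y)$ be surjective. For every $h>0$ let $X_h\subset X$, $Y_h\subset Y$ be closed subspaces (with the induced norms), let $F_h\colon X_h\to Y_h$ be continuous and let $\tilde x_h\in X_h$. Assume: (i) $\epsilon_h:=\|F_h(\tilde x_h)\|_Y+\|\bar x-\tilde x_h\|_X\to0$ as $h\to0$; (ii) there exist $A_h\in\mathcal L(X_h,Y_h)$, $R>0$ and a function $c\colon(0,\infty)\times(0,\infty)\to[0,\infty)$, nondecreasing in each variable with $\lim_{(h,r)\to0}c(h,r)=0$, such that $\|F_h(x)-F_h(y)-A_h(x-y)\|_Y\le c(h,r)\|x-y\|_X$ for all $x,y\in B_{X_h}(\tilde x_h,r)$, all $0<r<R$ and all $h>0$; (iii) there exist $\widehat A_h\in\mathcal L(X,Y)$ with $\widehat A_h(X_h)\subset Y_h$ and $\widehat A_h^{-1}(Y_h)\subset X_h$, such that $\lim_{h\to0}\|A-\widehat A_h\|_{\mathcal L(X,Y)}=0$ and $\lim_{h\to0}\|A_h-\widehat A_h\|_{\mathcal L(X_h,Y_h)}=0$. Then there is $h_0>0$ such that for every $0<h\le h_0$ there exists $\bar x_h\in X_h$ with $F_h(\bar x_h)=0$, $$\|\bar x-\bar x_h\|_X\le\Big(1+\frac{2}{\mathfrak C_{X,Y}(A)}\Big)\|\bar x-\tilde x_h\|_X+\frac{2}{\mathfrak C_{X,Y}(A)}\|F_h(\tilde x_h)\|_Y,$$ and $\operatorname{sur}_{X_h,Y_h}(F_h;\bar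 x_h)\ge\frac12\mathfrak C_{X,Y}(A)$. Moreover, if $A$ is an isomorphism, there exist $0<h_1\le h_0$ and $r_1>0$ such that for every $0<h\le h_1$, $F_h$ is strongly metrically regular near $\bar x_h$ and $\bar x_h$ is the unique element of $B_X(\bar x,r_1)\cap X_h$ with $F_h(\bar x_h)=0$.
   Context: $B_X(x,r)$ denotes a closed ball. For $T\in\mathcal L(X,Y)$, the Banach constant $\mathfrak C_{X,Y}(T)$ is the supremum of all $\kappa>0$ with $B_Y(0,\kappa)\subset T(B_X(0,1))$ if $T$ is surjective, and $\mathfrak C_{X,Y}(T)=0$ otherwise. A continuous map $F\colon X\to Y$ is metrically regular near $\bar x$ if there exist $\kappa,R>0$ with $B_Y(F(x),\kappa r)\cap B_Y(F(\bar x),R)\subset F(B_X(x,r))$ for all $0<r\le R$, $x\in B_X(\bar x,R)$; $\operatorname{sur}_{X,Y}(F;\bar x)$ is the supremum of such $\kappa$. $F$ is strongly metrically regular near $\bar x$ if it is metrically regular near $\bar x$ and there are neighborhoods $U$ of $\bar x$ and $V$ of $F(\bar x)$ such that $F^{-1}(y)\cap U$ is a single point for every $y\in V$. For maps $X_h\to Y_h$ the same notions are used with $X_h,Y_h$ in place of $X,Y$. *)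

From HB Require Import structures.
From mathcomp Require Import all_boot all_order all_algebra.
From mathcomp Require Import all_classical all_reals all_analysis.
Set Implicit Arguments. Unset Strict Implicit. Unset Printing Implicit Defensive.
Import Order.TTheory GRing.Theory Num.Theory.
Import numFieldNormedType.Exports.
Local Open Scope classical_set_scope.
Local Open Scope ring_scope.

Section Defs.
Context {R : realType}.

Definition closed_subspace (V : normedModType R) (S : set V) : Prop :=
  closed S /\ S 0 /\ (forall (a : R) (x y : V), S x -> S y -> S (a *: x + y)).

(* T is a bounded linear operator from the subspace D of U into the subspace
   E of V, i.e. an element of L(D, E) (only its values on D matter). *)
Definition sub_op (U V : normedModType R) (D : set U) (E : set V) (T : U -> V) :
  Prop :=
  (forall (a : R) (x y : U), D x -> D y -> T (a *: x + y) = a *: T x + T y) /\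
  (forall x, D x -> E (T x)) /\
  {within D, continuous T}.

Definition opnorm (U V : normedModType R) (D : set U) (T : U -> V) : R :=
  sup [set `|T x| | x in [set x | D x /\ `|x| <= 1]].

Definition banach_const (U V : normedModType R) (T : U -> V) : R :=
  if pselect (forall y : V, exists x : U, T x = y) then
    sup [set k : R | 0 < k /\
      [set y : V | `|y| <= k] `<=` T @` [set x : U | `|x| <= 1]]
  else 0.

Definition metreg_const (U V : normedModType R) (D : set U) (E : set V)
  (F : U -> V) (xb : U) (k : R) : Prop :=
  0 < k /\ exists Rr : R, 0 < Rr /\
   forall (r : R) (x : U), 0 < r -> r <= Rr -> D x -> `|x - xb| <= Rr ->
   forall y : V, E y -> `|y - F x| <= k * r -> `|y - F xb| <= Rr ->
   exists z : U, D z /\ `|z - x| <= r /\ F z = y.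

Definition metrically_regular (U V : normedModType R) (D : set U) (E : set V)
  (F : U -> V) (xb : U) : Prop :=
  exists k, metreg_const D E F xb k.

Definition sur (U V : normedModType R) (D : set U) (E : set V)
  (F : U -> V) (xb : U) : \bar R :=
  ereal_sup [set k%:E | k in [set k | metreg_const D E F xb k]].

(* Strong metric regularity near xb, for F : D -> E. Neighbourhoods in the
   subspaces are traces of neighbourhoods in the ambient spaces. *)
Definition strongly_metrically_regular (U V : normedModType R) (D : set U)
  (E : set V) (F : U -> V) (xb : U) : Prop :=
  metrically_regular D E F xb /\
  exists (N : set U) (M : set V), nbhs xb N /\ nbhs (F xb) M /\
    forall y, M y -> E y -> exists! x, (N x /\ D x) /\ F x = y.

Definition is_isomorphism (U V : normedModType R) (A : U -> V) : Prop :=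
  exists B : {linear V -> U}, continuous B /\ cancel A B /\ cancel B A.

End Defs.

(* The zeros are produced by the Lyusternik-Graves iteration
   x_(n+1) = x_n + u_n, where u_n is an approximate preimage of the residual
   y - F x_n under a linear map T that approximates F: if T covers with
   constant c and the linearization error is mu < c, the residuals decrease
   geometrically and the iterates converge to a solution z with
   |z - x| <= |y - F x| / (c - mu).  For T = F = A (approximate preimages
   being supplied by Baire's theorem) this is the open mapping theorem, so the
   Banach constant C of A is positive.  For small h the operators Ahat_h are
   uniformly close to A, hence cover Y_h by X_h with a constant close to C, and
   F_h is close to Ahat_h on a fixed ball around xt_h; the iteration for F_h
   started at xt_h gives the zero xb_h with the constant 2/C, and started at any
   point near xb_h it gives metric regularity with modulus C/2.  When A is an
   isomorphism it is bounded below, which makes F_h injective on that ball: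
   hence strong metric regularity and local uniqueness. *)

From HB Require Import structures.
From mathcomp Require Import all_boot all_order all_algebra.
From mathcomp Require Import all_classical all_reals all_analysis.
From mathcomp Require Import ring lra.
Import Order.TTheory GRing.Theory Num.Theory.
Import numFieldNormedType.Exports.
Local Open Scope classical_set_scope.
Local Open Scope ring_scope.

Lemma cvgn_geometric_increments (R : realType) (X : completeNormedModType R)
    (s : X ^nat) (a q : R) :
  0 <= q < 1 -> (forall n, `|s n.+1 - s n| <= a * q ^+ n) -> cvgn s.
Proof.
move=> /andP[q_ge0 q_lt1] ds.
have a_ge0 : 0 <= a by have := le_trans (normr_ge0 _) (ds 0%N); rewrite mulr1.
have : cvgn (series (telescope s)).
  apply: normed_cvg; apply: (@series_le_cvg _ _ (geometric a q)) => [n|n|n|].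
  - exact: normr_ge0.
  - by rewrite /= mulr_ge0 ?exprn_ge0.
  - exact: ds.
  - by apply: is_cvg_geometric_series; rewrite ger0_norm.
move=> /(is_cvgD (is_cvg_cst (s 0%N))).
by rewrite (_ : _ + _ = s)// funeqE => n; rewrite [RHS]eq_sum_telescope.
Qed.

Lemma within_continuous_cvgn (R : realType) (X Y : normedModType R) (D : set X)
    (G : X -> Y) (s : X ^nat) (z : X) :
  {within D, continuous G} -> (forall n, D (s n)) -> D z ->
  s @ \oo --> z -> G (s n) @[n --> \oo] --> G z.
Proof.
move=> /subspace_continuousP/(_ z) Gz Ds Dz sz.
have s_in : s @ \oo --> within D (nbhs z).
  move=> P /sz; apply: (@filterS _ \oo) => n /=; apply; exact: Ds.
exact: cvg_trans (cvg_app G s_in) (Gz Dz).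
Qed.

(** * The Lyusternik-Graves iteration *)

Section Graves.
Context {R : realType} {X : completeNormedModType R} {Y : normedModType R}.
Context {D : set X} {E : set Y} {T G : X -> Y} {x0 : X} {rho M th mu K : R}.
Hypotheses (D_closed : closed D) (D_add : forall x u, D x -> D u -> D (x + u))
  (E_res : forall x y, D x -> E y -> E (y - G x)) (G_cont : {within D, continuous G})
  (M_ge0 : 0 <= M) (th_ge0 : 0 <= th) (mu_ge0 : 0 <= mu)
  (q_lt1 : th + mu * M < 1) (M_le : M <= K * (1 - (th + mu * M)))
  (G_approx : forall x x', D x -> D x' -> `|x - x0| <= rho -> `|x' - x0| <= rho ->
      `|G x - G x' - T (x - x')| <= mu * `|x - x'|).

Section Iteration.
Context {pick : Y -> X}.
Hypothesis pickP : forall v, E v ->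
  D (pick v) /\ `|pick v| <= M * `|v| /\ `|v - T (pick v)| <= th * `|v|.
Context {x : X} {y : Y}.
Hypotheses (Dx : D x) (Ey : E y) (xy_near : `|x - x0| + K * `|y - G x| <= rho).

Let q := th + mu * M.
Let r0 := `|y - G x|.
Let s n := iter n (fun z => z + pick (y - G z)) x.

Let q_ge0 : 0 <= q. Proof. by rewrite addr_ge0 ?mulr_ge0. Qed.

Let le_Kr0 {n a} : (1 - q) * a <= M * r0 * (1 - q ^+ n) -> a <= K * r0.
Proof.
have r0_ge0 : 0 <= r0 by exact: normr_ge0.
have Mqn_ge0 : 0 <= M * r0 * q ^+ n by rewrite !mulr_ge0 ?exprn_ge0.
have : M * r0 <= K * (1 - q) * r0 by rewrite ler_wpM2r.
move=> MKr0 le_a; rewrite -(@ler_pM2l _ (1 - q)) ?subr_gt0//; nra.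
Qed.

Let near_x0 {z} : `|z - x| <= K * r0 -> `|z - x0| <= rho.
Proof.
move=> zx; have := ler_distD x z x0; have := xy_near; rewrite -/r0; lra.
Qed.

Lemma graves_step z : D z -> `|z - x0| <= rho ->
    `|z + pick (y - G z) - x0| <= rho ->
  `|y - G (z + pick (y - G z))| <= q * `|y - G z|.
Proof.
move=> Dz z_near zu_near; set v := y - G z; set u := pick v.
have [Du [u_le Tu]] := pickP _ (E_res _ _ Dz Ey).
have Glin := G_approx _ _ (D_add _ _ Dz Du) Dz zu_near z_near.
rewrite [z + u - z]addrC addKr in Glin.
have -> : y - G (z + u) = (v - T u) - (G (z + u) - G z - T u).
  by rewrite /v opprB addrA subrK opprB addrA subrK.
apply: le_trans (ler_normB _ _) _.
have : mu * `|u| <= mu * (M * `|v|) by rewrite ler_wpM2l.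
rewrite /q; nra.
Qed.

(* The last conjunct is |s n - x| <= M r0 (1 - q ^ n) / (1 - q), the partial
   geometric sum of the step lengths, cleared of the division. *)
Lemma graves_iter n : D (s n) /\ `|y - G (s n)| <= q ^+ n * r0 /\
  (1 - q) * `|s n - x| <= M * r0 * (1 - q ^+ n).
Proof.
elim: n => [|n [Dn [res_n dist_n]]].
  by rewrite /s /= expr0 mul1r subrr normr0 mulr0 subrr mulr0.
have sS : s n.+1 = s n + pick (y - G (s n)) by [].
have [Du [u_le _]] := pickP _ (E_res _ _ Dn Ey).
have u_le' : `|pick (y - G (s n))| <= M * (q ^+ n * r0).
  by apply: le_trans u_le _; rewrite ler_wpM2l.
have dist_n1 : (1 - q) * `|s n.+1 - x| <= M * r0 * (1 - q ^+ n.+1).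
  have : `|s n.+1 - x| <= `|s n - x| + `|pick (y - G (s n))|.
    by rewrite sS addrAC; exact: ler_normD.
  have q1 : 0 <= 1 - q by rewrite subr_ge0 ltW.
  rewrite exprS; nra.
split; first by rewrite sS; exact: D_add.
split=> //; rewrite exprS -mulrA [in G _]sS.
apply: le_trans (graves_step _ Dn _ _) _.
- exact/near_x0/(le_Kr0 dist_n).
- by rewrite -sS; exact/near_x0/(le_Kr0 dist_n1).
- by rewrite ler_wpM2l.
Qed.

Lemma graves_cvg : cvgn s.
Proof.
apply: (@cvgn_geometric_increments _ _ _ (M * r0) q) => [|n].
  by rewrite q_ge0.
have [Dn [res_n _]] := graves_iter n.
have [_ [u_le _]] := pickP _ (E_res _ _ Dn Ey).
rewrite /s iterS -/(s n) addrAC subrr add0r (le_trans u_le)//.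
by rewrite -mulrA ler_wpM2l// mulrC.
Qed.

Lemma graves_limit : D (limn s) /\ `|limn s - x| <= K * r0 /\ G (limn s) = y.
Proof.
have sz : s @ \oo --> limn s := graves_cvg.
have Ds n : D (s n) by have [] := graves_iter n.
have Dz : D (limn s) by apply: closed_cvg _ D_closed _ _ sz; exact: nearW.
split=> //; split.
  have : [set w | `|x - w| <= K * r0] (limn s).
    apply: closed_cvg _ (@closed_closed_ball_ _ _ x (K * r0)) _ _ sz.
    apply: nearW => n; rewrite /closed_ball_ /= distrC.
    exact: le_Kr0 (graves_iter n).2.2.
  by rewrite /= distrC.
apply: (@cvg_unique _ _ (G (s n) @[n --> \oo])) => //.
  exact: within_continuous_cvgn.
apply/cvgrPdist_le => e e0.
have /cvgrPdist_le/(_ e e0) : geometric r0 q n @[n --> \oo] --> 0.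
  by apply: cvg_geometric; rewrite ger0_norm// q_lt1.
apply: filterS => n.
rewrite sub0r normrN /= ger0_norm ?mulr_ge0 ?exprn_ge0 ?normr_ge0 //.
by apply: le_trans; rewrite mulrC; exact: (graves_iter n).2.1.
Qed.

End Iteration.

Theorem graves :
  (forall v, E v -> exists u, D u /\ `|u| <= M * `|v| /\ `|v - T u| <= th * `|v|) ->
  forall x y, D x -> E y -> `|x - x0| + K * `|y - G x| <= rho ->
  exists z, D z /\ `|z - x| <= K * `|y - G x| /\ G z = y.
Proof.
move=> cover x y Dx Ey xy_near.
have /choice[pick pickP] : forall v, exists u,
    E v -> D u /\ `|u| <= M * `|v| /\ `|v - T u| <= th * `|v|.
  move=> v; have [Ev|nEv] := pselect (E v); last by exists 0 => /nEv.
  by have [u ?] := cover v Ev; exists u.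
by eexists; exact: (graves_limit pickP Dx Ey xy_near).
Qed.

End Graves.

Corollary graves_exact_cover {R : realType} {X : completeNormedModType R}
    {Y : normedModType R} {D : set X} {E : set Y} {T G : X -> Y} {x0 : X}
    {rho c mu : R} :
  closed D -> (forall x u, D x -> D u -> D (x + u)) ->
  (forall x y, D x -> E y -> E (y - G x)) -> {within D, continuous G} ->
  0 <= mu < c ->
  (forall x x', D x -> D x' -> `|x - x0| <= rho -> `|x' - x0| <= rho ->
      `|G x - G x' - T (x - x')| <= mu * `|x - x'|) ->
  (forall v, E v -> exists u, D u /\ T u = v /\ c * `|u| <= `|v|) ->
  forall x y, D x -> E y -> `|x - x0| + (c - mu)^-1 * `|y - G x| <= rho ->
  exists z, D z /\ `|z - x| <= (c - mu)^-1 * `|y - G x| /\ G z = y.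
Proof.
move=> Dcl D_add E_res Gc /andP[mu0 mu_c] G_approx cover.
have c0 : 0 < c := le_lt_trans mu0 mu_c.
apply: (graves (M := c^-1) Dcl D_add E_res Gc _ (lexx 0) mu0 _ _ G_approx).
- by rewrite invr_ge0 ltW.
- by rewrite add0r mulrC ltr_pdivrMl // mulr1.
- rewrite add0r (_ : _ * _ = c^-1) //.
  by field; rewrite subr_eq0 !gt_eqF.
- move=> v Ev; have [u [Du [Tu cu]]] := cover v Ev.
  exists u; rewrite Tu subrr normr0 mul0r; split=> //; split=> //.
  by rewrite -(ler_pM2l c0) mulrA mulfV ?gt_eqF // mul1r.
Qed.

(** * The open mapping theorem and the Banach constant *)

Lemma closure_norm_lt {R : realType} {Y : normedModType R} {B : set Y} {p e} :
  closure B p -> 0 < e -> exists2 b, B b & `|p - b| < e.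
Proof.
move=> /(_ _ (nbhsx_ballx p e _)) pB e0; have [b [Bb pb]] := pB e0.
by exists b; move: pb; rewrite -ball_normE.
Qed.

Section OpenMapping.
Context {R : realType} {X Y : completeNormedModType R}.
Context {A : {linear X -> Y}}.
Hypothesis A_surj : forall y, exists x, A x = y.

(* Baire: some closure of the image of a ball has nonempty interior. *)
Lemma image_ball_dense : exists (n : nat) (r : R), 0 < r /\
  forall v : Y, `|v| < r -> forall e, 0 < e ->
    exists2 u : X, `|u| <= 2 * n%:R & `|v - A u| < e.
Proof.
pose S n := closure (A @` [set x : X | `|x| <= n%:R]).
have [i not_dense] : exists i, ~ dense (~` S i).
  apply: contrapT => all_dense.
  have S_open_dense i : open (~` S i) /\ dense (~` S i).
    split; first exact/closed_openC/closed_closure.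
    by apply: contrapT => ?; apply: all_dense; exists i.
  have [a [_ Sa]] := Baire S_open_dense (ex_intro setT 0 I) openT.
  have [x Ax] := A_surj a.
  apply: (Sa (Num.Def.truncn `|x|).+1 I); rewrite -Ax; apply: subset_closure.
  by exists x => //; exact/ltW/truncnS_gt.
case: (denseNE not_dense) => O0 [[x /open_nbhs_nbhs/nbhs_ballP[r r0 xrO0]] O0S].
have ball_S w : ball x r w -> S i w.
  move=> /xrO0 O0w; apply: contrapT => nSw.
  by have : (O0 `&` ~` S i) w by []; rewrite O0S.
exists i, r; split=> // v v_lt e e0.
have e2 : 0 < e / 2 by rewrite divr_gt0.
have xv_ball : ball x r (x + v).
  by rewrite -ball_normE /= opprD addrA subrr sub0r normrN.
have [_ [x1 x1_le <-] Ax1] := closure_norm_lt (ball_S _ xv_ball) e2.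
have [_ [x2 x2_le <-] Ax2] := closure_norm_lt (ball_S _ (ballxx x r0)) e2.
exists (x1 - x2).
  by apply: le_trans (ler_normB _ _) _; rewrite mulr2n mulrDl mul1r lerD.
rewrite linearB (_ : v - _ = (x + v - A x1) - (x - A x2)); last first.
  by rewrite [x + v]addrC (addrAC v x) addrKA opprK opprB addrA addrAC.
by apply: le_lt_trans (ler_normB _ _) _; rewrite (splitr e) ltrD.
Qed.

Lemma approximate_cover : exists2 M : R, 0 < M &
  forall v, exists u, `|u| <= M * `|v| /\ `|v - A u| <= 2^-1 * `|v|.
Proof.
have [n [r [r0 dense_image]]] := image_ball_dense.
(* |u| <= 4 n |v| / r; the + 1 keeps the constant positive when n = 0. *)
exists ((4 * n%:R + 1) / r); first by rewrite divr_gt0 // ltr_wpDl // mulr_ge0.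
move=> v; have [->|v0] := eqVneq v 0.
  by exists 0; rewrite linear0 !normr0 subrr normr0 !mulr0.
have nv : 0 < `|v| by rewrite normr_gt0.
pose c := r / (2 * `|v|).
have c0 : 0 < c by rewrite divr_gt0 // mulr_gt0.
have ic0 : 0 <= c^-1 by rewrite invr_ge0 ltW.
have cv_lt : `|c *: v| < r.
  rewrite normrZ gtr0_norm // /c -mulrA gtr_pMr // invfM -mulrA mulVf ?gt_eqF //.
  by rewrite mulr1 invf_lt1 // ltr1n.
have [u u_le Au] := dense_image _ cv_lt (r / 4) (divr_gt0 r0 (ltr0n _ 4)).
exists (c^-1 *: u); split.
  rewrite normrZ gtr0_norm ?invr_gt0 //.
  apply: le_trans (ler_wpM2l ic0 u_le) _.
  rewrite (_ : _ * `|v| = c^-1 * (2 * n%:R) + `|v| / r); last first.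
    by rewrite /c; field; rewrite ?gt_eqF.
  by rewrite lerDl divr_ge0 // ltW.
rewrite (_ : v - _ = c^-1 *: (c *: v - A u)); last first.
  by rewrite linearZ /= scalerBr scalerA mulVf ?gt_eqF // scale1r.
rewrite normrZ gtr0_norm ?invr_gt0 //.
apply: le_trans (ler_wpM2l ic0 (ltW Au)) _.
by rewrite le_eqVlt (_ : c^-1 * _ = 2^-1 * `|v|) ?eqxx// /c; field; rewrite ?gt_eqF.
Qed.

Hypothesis A_cont : continuous A.

Theorem open_mapping : exists2 K : R, 0 < K &
  forall y, exists x, A x = y /\ `|x| <= K * `|y|.
Proof.
have [M M0 cover] := approximate_cover.
exists (2 * M) => [|y]; first by rewrite mulr_gt0.
have A_approx (x x' : X) : setT x -> setT x' -> `|x - 0| <= 2 * M * `|y| ->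
    `|x' - 0| <= 2 * M * `|y| -> `|A x - A x' - A (x - x')| <= 0 * `|x - x'|.
  by move=> *; rewrite linearB subrr normr0 mul0r.
have [|||||z [_ [zy Az]]] := graves (th := 2^-1) (K := 2 * M) closedT
  (fun _ _ _ _ => I) (fun _ _ _ _ => I) (continuous_subspaceT A_cont) (ltW M0)
  _ (lexx 0) _ _ A_approx _ 0 y I I.
- by rewrite invr_ge0.
- by rewrite mul0r addr0 invf_lt1 ?ltr1n.
- by rewrite mul0r addr0 (_ : 2 * M * _ = M) //; field.
- by move=> v _; have [u ?] := cover v; exists u.
- by rewrite subrr normr0 add0r linear0 subr0.
by exists z; move: zy; rewrite subr0 linear0 subr0.
Qed.

End OpenMapping.

Section BanachConstant.
Context {R : realType} {X Y : completeNormedModType R}.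
Context {A : {linear X -> Y}}.

Lemma banach_const_trivial : (forall y : Y, y = 0) -> banach_const A = 0.
Proof.
move=> Y0; rewrite /banach_const; case: pselect => [?|//].
apply: sup_out => -[_ [L L_ub]].
have : 0 < `|L| + 1 /\ [set y : Y | `|y| <= `|L| + 1] `<=` A @` [set x | `|x| <= 1].
  split; first by rewrite ltr_wpDl.
  by move=> y _; exists 0; rewrite /= ?normr0 // linear0 (Y0 y).
move=> /L_ub; apply/negP; rewrite -ltNge.
by apply: le_lt_trans (ler_norm L) _; rewrite ltrDl.
Qed.

Hypotheses (A_cont : continuous A) (A_surj : forall y, exists x, A x = y).

Let S := [set k : R |
  0 < k /\ [set y : Y | `|y| <= k] `<=` A @` [set x : X | `|x| <= 1]].

Let banach_constE : banach_const A = sup S.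
Proof. by rewrite /banach_const; case: pselect => // /(_ A_surj). Qed.

Let scale_norm {y : Y} {k} : 0 <= k -> y != 0 -> `|(k / `|y|) *: y| = k.
Proof.
move=> k0 y0; rewrite normrZ ger0_norm ?divr_ge0 // -mulrA mulVf ?mulr1 //.
by rewrite normr_eq0.
Qed.

Let S_cover {k} : S k -> forall y, exists x, A x = y /\ k * `|x| <= `|y|.
Proof.
move=> [k0 kS] y; have [->|y0] := eqVneq y 0.
  by exists 0; rewrite linear0 normr0 mulr0.
have ny : 0 < `|y| by rewrite normr_gt0.
have [x' /= x'_le Ax'] : (A @` [set x | `|x| <= 1]) ((k / `|y|) *: y).
  by apply: kS; rewrite /= scale_norm // ltW.
exists ((`|y| / k) *: x'); split.
  rewrite linearZ /= Ax' scalerA (_ : _ * _ = 1) ?scale1r //.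
  by field; rewrite ?gt_eqF.
rewrite normrZ ger0_norm ?divr_ge0 ?normr_ge0 ?(ltW k0) //.
rewrite (_ : k * _ = `|y| * `|x'|).
  exact: ler_piMr.
by field; rewrite gt_eqF.
Qed.

Hypothesis Y_nontrivial : exists y0 : Y, y0 != 0.

Let S_has_sup : has_sup S.
Proof.
have [K K0 K_cover] := open_mapping A_surj A_cont.
have [L L0 A_lip] := linear_lipschitz A_cont.
have [y0 y00] := Y_nontrivial.
split.
  exists K^-1; split; first by rewrite invr_gt0.
  move=> y /= y_le; have [x [Ax x_le]] := K_cover y; exists x => //=.
  apply: le_trans x_le _; have := ler_wpM2l (ltW K0) y_le.
  by rewrite mulfV // gt_eqF.
exists L => k [k0 kS].
have /kS[x /= x_le Ax] : `|(k / `|y0|) *: y0| <= k by rewrite scale_norm // ltW.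
rewrite -(scale_norm (ltW k0) y00) -Ax.
by apply: le_trans (A_lip x) _; rewrite ler_piMr // ltW.
Qed.

Lemma banach_const_gt0 : 0 < banach_const A.
Proof.
rewrite banach_constE; have [[k Sk] _] := S_has_sup.
exact: lt_le_trans Sk.1 (sup_upper_bound S_has_sup Sk).
Qed.

Lemma banach_const_cover c : c < banach_const A ->
  forall y, exists x, A x = y /\ c * `|x| <= `|y|.
Proof.
rewrite banach_constE => c_lt y.
have [k Sk] := sup_adherent (ltac:(by rewrite subr_gt0) : 0 < sup S - c) S_has_sup.
rewrite opprB addrCA subrr addr0 => c_lt_k.
have [x [Ax kx]] := S_cover Sk y; exists x; split => //.
by apply: le_trans kx; rewrite ler_wpM2r // ltW.
Qed.

End BanachConstant.

(** * Closed subspaces and operators on them *)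

Section SubspaceOperators.
Context {R : realType} {U V : normedModType R}.
Context {D : set U}.
Hypothesis D_sub : closed_subspace D.

Lemma closed_subspace0 : D 0.
Proof. by case: D_sub => _ []. Qed.

Lemma closed_subspaceZ a {x} : D x -> D (a *: x).
Proof. by case: D_sub => _ [D0 DZD] Dx; rewrite -[a *: x]addr0; exact: DZD. Qed.

Lemma closed_subspaceD {x y} : D x -> D y -> D (x + y).
Proof. by case: D_sub => _ [_ DZD] Dx Dy; rewrite -[x]scale1r; exact: DZD. Qed.

Lemma closed_subspaceB {x y} : D x -> D y -> D (x - y).
Proof.
move=> Dx Dy; apply: closed_subspaceD => //.
by rewrite -scaleN1r; exact: closed_subspaceZ.
Qed.

Context {E : set V} {T : U -> V}.
Hypothesis T_op : sub_op D E T.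

Lemma sub_op0 : T 0 = 0.
Proof.
have [T_lin _] := T_op; have := T_lin 1 0 0 closed_subspace0 closed_subspace0.
by rewrite !scale1r addr0 => /(congr1 (fun v => v - T 0)); rewrite subrr addrK => ->.
Qed.

Lemma sub_opZ a x : D x -> T (a *: x) = a *: T x.
Proof.
have [T_lin _] := T_op => Dx.
by have := T_lin a x 0 Dx closed_subspace0; rewrite !addr0 sub_op0 addr0.
Qed.

Lemma sub_op_bounded :
  exists2 k : R, 0 < k & forall x, D x -> `|T x| <= k * `|x|.
Proof.
have [_ [_ /subspace_continuousP/(_ 0 closed_subspace0)]] := T_op.
move=> /cvgrPdist_lt/(_ 1 ltr01); rewrite /from_subspace sub_op0.
rewrite near_withinE => /nbhs_ballP[d /= d0 dT].
exists (2 / d); first by rewrite divr_gt0.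
move=> x Dx; have [->|x0] := eqVneq x 0; first by rewrite sub_op0 !normr0 mulr0.
have nx : 0 < `|x| by rewrite normr_gt0.
pose a := d / (2 * `|x|).
have a0 : 0 < a by rewrite divr_gt0 ?mulr_gt0.
have /dT : ball 0 d (a *: x).
  rewrite -ball_normE /= sub0r normrN normrZ gtr0_norm // /a.
  rewrite (_ : d / (2 * `|x|) * `|x| = d / 2); last by field; rewrite gt_eqF.
  by rewrite ltr_pdivrMr // ltr_pMr // ltr1n.
move=> /(_ (closed_subspaceZ a Dx)).
rewrite sub0r normrN sub_opZ // normrZ gtr0_norm //.
rewrite -(ler_pM2l a0) (_ : a * (2 / d * `|x|) = 1) => [/ltW //|].
by rewrite /a; field; rewrite !gt_eqF.
Qed.

End SubspaceOperators.

Lemma opnorm_le {R : realType} {U V : normedModType R} {D : set U}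
    (f : U -> V) :
  closed_subspace D -> (forall a x, D x -> f (a *: x) = a *: f x) ->
  (exists k, forall x, D x -> `|f x| <= k * `|x|) ->
  forall x, D x -> `|f x| <= opnorm D f * `|x|.
Proof.
move=> D_sub fZ [k f_le] x Dx.
set S := [set `|f x| | x in [set x | D x /\ `|x| <= 1]].
have S_ub : has_ubound S.
  exists `|k| => _ [z [Dz z1] <-].
  apply: le_trans (f_le z Dz) _; apply: le_trans (ler_norm _) _.
  by rewrite normrM normr_id ler_piMr.
have [->|x0] := eqVneq x 0.
  have := fZ 0 0 (closed_subspace0 D_sub); rewrite !scale0r => ->.
  by rewrite !normr0 mulr0.
have nx : 0 < `|x| by rewrite normr_gt0.
have : S `|f (`|x|^-1 *: x)|.
  exists (`|x|^-1 *: x) => //; split; first exact: closed_subspaceZ.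
  by rewrite normrZ ger0_norm ?invr_ge0 // mulVf // gt_eqF.
move=> /(ub_le_sup S_ub); rewrite fZ // normrZ ger0_norm ?invr_ge0 //.
by rewrite ler_pdivrMl // mulrC.
Qed.

Lemma isomorphism_bounded_below {R : realType} {X Y : normedModType R}
    {A : X -> Y} :
  is_isomorphism A -> exists2 k : R, 0 < k & forall x, k * `|x| <= `|A x|.
Proof.
move=> [B [Bc [AB _]]]; have [L L0 B_lip] := linear_lipschitz Bc.
exists L^-1; first by rewrite invr_gt0.
by move=> x; rewrite ler_pdivrMl // -{1}(AB x); exact: B_lip.
Qed.

Lemma cover_perturbation {R : realType} {X Y : completeNormedModType R}
    {A B : {linear X -> Y}} {c e : R} :
  continuous B -> 0 <= e < c ->
  (forall y, exists x, A x = y /\ c * `|x| <= `|y|) ->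
  (forall x, `|A x - B x| <= e * `|x|) ->
  forall y, exists x, B x = y /\ (c - e) * `|x| <= `|y|.
Proof.
move=> Bc ec A_cover AB y.
have ce0 : 0 < c - e by case/andP: ec => _; rewrite subr_gt0.
have B_approx (x x' : X) : setT x -> setT x' -> `|x - 0| <= (c - e)^-1 * `|y| ->
    `|x' - 0| <= (c - e)^-1 * `|y| -> `|B x - B x' - A (x - x')| <= e * `|x - x'|.
  by move=> *; rewrite -linearB distrC; exact: AB.
have [||z [_ [zy Bz]]] := graves_exact_cover closedT (fun _ _ _ _ => I)
  (fun _ _ _ _ => I) (continuous_subspaceT Bc) ec B_approx _ 0 y I I.
- by move=> v _; have [u ?] := A_cover v; exists u.
- by rewrite subrr normr0 add0r linear0 subr0.
by exists z; split=> //; move: zy; rewrite subr0 linear0 subr0 ler_pdivlMl.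
Qed.

(** * A single discretization level *)

Section LocalAnalysis.
Context {R : realType} {X Y : completeNormedModType R}.
Context {A Ahat : {linear X -> Y}} {D : set X} {E : set Y} {F Ah : X -> Y}.
Context {xt : X} {C e rho : R}.
Hypotheses (A_cont : continuous A) (Ahat_cont : continuous Ahat)
  (D_sub : closed_subspace D) (E_sub : closed_subspace E)
  (F_cont : {within D, continuous F}) (FE : forall x, D x -> E (F x))
  (Ah_op : sub_op D E Ah) (AhatE : forall x, E (Ahat x) -> D x) (Dxt : D xt)
  (C_gt0 : 0 < C) (e_gt0 : 0 < e) (eC : 16 * e <= C) (rho_gt0 : 0 < rho)
  (* Any covering constant below C would do for 3C/4; e <= C/16 leaves room
     for the perturbations Ahat - A and F - Ahat. *)
  (A_cover : forall y, exists x, A x = y /\ 3 * C / 4 * `|x| <= `|y|)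
  (A_Ahat : `|opnorm setT (fun x => A x - Ahat x)| < e)
  (Ah_Ahat : `|opnorm D (fun x => Ah x - Ahat x)| < e)
  (F_approx : forall x y, D x -> `|x - xt| <= rho -> D y -> `|y - xt| <= rho ->
     `|F x - F y - Ah (x - y)| <= e * `|x - y|).

Let setT_sub : closed_subspace [set: X].
Proof. by split=> //; exact: closedT. Qed.

Lemma A_Ahat_le x : `|A x - Ahat x| <= e * `|x|.
Proof.
apply: le_trans (opnorm_le (fun x => A x - Ahat x) setT_sub _ _ x I) _.
- by move=> a z _; rewrite (linearZZ A) (linearZZ Ahat) scalerBr.
- have [kA _ kA_le] := linear_lipschitz A_cont.
  have [kH _ kH_le] := linear_lipschitz Ahat_cont.
  by exists (kA + kH) => z _; apply: le_trans (ler_normB _ _) _; rewrite mulrDl lerD.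
- by rewrite ler_wpM2r // (le_trans (ler_norm _)) // ltW.
Qed.

Lemma Ah_Ahat_le {x} : D x -> `|Ah x - Ahat x| <= e * `|x|.
Proof.
move=> Dx; apply: le_trans (opnorm_le (fun x => Ah x - Ahat x) D_sub _ _ x Dx) _.
- by move=> a z Dz; rewrite (linearZZ Ahat) (sub_opZ D_sub Ah_op) // scalerBr.
- have [kA _ kA_le] := sub_op_bounded D_sub Ah_op.
  have [kH _ kH_le] := linear_lipschitz Ahat_cont.
  exists (kA + kH) => z Dz; apply: le_trans (ler_normB _ _) _.
  by rewrite mulrDl lerD ?kA_le.
- by rewrite ler_wpM2r // (le_trans (ler_norm _)) // ltW.
Qed.

Lemma F_approx_Ahat {x x'} :
  D x -> D x' -> `|x - xt| <= rho -> `|x' - xt| <= rho ->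
  `|F x - F x' - Ahat (x - x')| <= 2 * e * `|x - x'|.
Proof.
move=> Dx Dx' x_near x'_near.
rewrite (_ : F x - _ - _ =
  F x - F x' - Ah (x - x') + (Ah (x - x') - Ahat (x - x'))).
  apply: le_trans (ler_normD _ _) _.
  have := F_approx _ _ Dx x_near Dx' x'_near.
  have := Ah_Ahat_le (closed_subspaceB D_sub Dx Dx'); lra.
by rewrite addrA subrK.
Qed.

Lemma Ahat_cover y : exists x, Ahat x = y /\ (3 * C / 4 - e) * `|x| <= `|y|.
Proof.
apply: (cover_perturbation Ahat_cont _ A_cover A_Ahat_le).
by rewrite (ltW e_gt0) /=; have := eC; have := e_gt0; lra.
Qed.

Lemma local_cover {x y} : D x -> E y -> `|x - xt| + 2 / C * `|y - F x| <= rho ->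
  exists z, D z /\ `|z - x| <= 2 / C * `|y - F x| /\ F z = y.
Proof.
move=> Dx Ey xy_near.
(* Ahat covers with 3C/4 - e and is 2e-close to F: Graves gives the constant
   (3C/4 - 3e)^-1 <= 2/C. *)
have K_le : (3 * C / 4 - e - 2 * e)^-1 <= 2 / C.
  rewrite -[2 / C]invf_div lef_pV2 ?posrE ?divr_gt0 //;
    by have := eC; have := e_gt0; lra.
have res_ge0 : 0 <= `|y - F x| := normr_ge0 _.
have [|||z [Dz [zx Fz]]] := graves_exact_cover (c := 3 * C / 4 - e) D_sub.1
  (fun _ _ => closed_subspaceD D_sub)
  (fun x y Dx Ey => closed_subspaceB E_sub Ey (FE _ Dx)) F_cont _
  (fun _ _ => F_approx_Ahat) _ x y Dx Ey _.
- by rewrite mulr_ge0 ?ltW //=; have := eC; have := e_gt0; lra.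
- move=> v Ev; have [u [Au u_le]] := Ahat_cover v.
  by exists u; split=> //; apply: AhatE; rewrite Au.
- by apply: le_trans xy_near; rewrite lerD2l ler_wpM2r.
exists z; split=> //; split=> //.
by apply: le_trans zx _; rewrite ler_wpM2r.
Qed.

Lemma local_metreg xb : D xb -> `|xb - xt| <= rho / 4 ->
  metreg_const D E F xb (C / 2).
Proof.
move=> Dxb xb_near; split; first by rewrite divr_gt0.
exists (rho / 4); split; first by rewrite divr_gt0.
move=> r x r_gt0 r_le Dx x_near y Ey y_near _.
have res_le : 2 / C * `|y - F x| <= r.
  apply: le_trans (ler_wpM2l _ y_near) _; first by rewrite divr_ge0 ?ltW.
  by rewrite mulrA (_ : 2 / C * (C / 2) = 1) ?mul1r //; field; rewrite gt_eqF.
have [|z [Dz [zx Fz]]] := local_cover Dx Ey.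
  by have := ler_distD xb x xt; have := rho_gt0; lra.
by exists z; split=> //; split=> //; exact: le_trans zx res_le.
Qed.

Section Injectivity.
Hypothesis A_below : forall u, 8 * e * `|u| <= `|A u|.

Lemma local_injective {x x'} :
  D x -> D x' -> `|x - xt| <= rho -> `|x' - xt| <= rho -> F x = F x' -> x = x'.
Proof.
(* 8 e |u| <= |A u| <= |A u - Ahat u| + |Ahat u| <= 3 e |u| for u = x - x'. *)
move=> Dx Dx' x_near x'_near Fxx'.
have := F_approx_Ahat Dx Dx' x_near x'_near; rewrite Fxx' subrr sub0r normrN.
have := A_Ahat_le (x - x'); have := A_below (x - x').
have := ler_normD (A (x - x') - Ahat (x - x')) (Ahat (x - x')); rewrite subrK.
move=> *; apply/eqP; rewrite -subr_eq0 -normr_le0; have := e_gt0; nra.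
Qed.

Lemma local_strongly_metreg xb : D xb -> `|xb - xt| <= rho / 4 ->
  strongly_metrically_regular D E F xb.
Proof.
move=> Dxb xb_near; split; first by exists (C / 2); exact: local_metreg.
exists (ball xb (rho / 4)), (ball (F xb) (C * rho / 8)).
split; first by apply: nbhsx_ballx; rewrite divr_gt0.
split; first by apply: nbhsx_ballx; rewrite divr_gt0 ?mulr_gt0.
move=> y; rewrite -ball_normE /= distrC => y_near Ey.
have res_lt : 2 / C * `|y - F xb| < rho / 4.
  rewrite (_ : rho / 4 = 2 / C * (C * rho / 8)); last by field; rewrite gt_eqF.
  by rewrite ltr_pM2l // divr_gt0.
have [|z [Dz [zxb Fz]]] := local_cover Dxb Ey; first by have := rho_gt0; lra.
have z_near : `|z - xt| <= rho by have := ler_distD xb z xt; have := rho_gt0; lra.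
exists z; split.
  by split=> //; split=> //; rewrite -ball_normE /= distrC; lra.
move=> x' [[]]; rewrite -ball_normE /= distrC => x'_near Dx' Fx'.
apply: local_injective Dz Dx' z_near _ _; last by rewrite Fz Fx'.
by have := ler_distD xb x' xt; have := rho_gt0; lra.
Qed.

End Injectivity.

Lemma local_solution : 2 / C * `|F xt| <= rho / 4 ->
  exists xb, D xb /\ F xb = 0 /\ `|xb - xt| <= 2 / C * `|F xt| /\
    metreg_const D E F xb (C / 2) /\
    ((forall u, 8 * e * `|u| <= `|A u|) ->
       strongly_metrically_regular D E F xb /\
       forall z, D z -> `|z - xt| <= rho -> F z = 0 -> z = xb).
Proof.
move=> Fxt_small.
have [|xb [Dxb [xb_dist Fxb]]] := local_cover Dxt (closed_subspace0 E_sub).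
  by rewrite subrr normr0 add0r sub0r normrN; have := rho_gt0; lra.
rewrite sub0r normrN in xb_dist.
have xb_near : `|xb - xt| <= rho / 4 := le_trans xb_dist Fxt_small.
exists xb; do 3!split=> //; split; first exact: local_metreg.
move=> A_below; split; first exact: local_strongly_metreg.
move=> z Dz z_near Fz; apply: (local_injective A_below Dz Dxb z_near).
  by have := rho_gt0; lra.
by rewrite Fz Fxb.
Qed.

End LocalAnalysis.

(** * The discretization *)

Lemma near_right0P (R : realType) (P : R -> Prop) :
  (\forall h \near 0^'+, P h) ->
  exists2 h0 : R, 0 < h0 & forall h, 0 < h -> h <= h0 -> P h.
Proof.
rewrite near_withinE => /nbhs_ballP[d /= d_gt0 dP].
exists (d / 2) => [|h h_gt0 h_le]; first by rewrite divr_gt0.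
apply: (dP h _ h_gt0); rewrite -ball_normE /= sub0r normrN gtr0_norm //.
by apply: le_lt_trans h_le _; rewrite ltr_pdivrMr // ltr_pMr // ltr1n.
Qed.

Section Discretization.
Context {R : realType} {X Y : completeNormedModType R}.
Context {xbar : X} {A : {linear X -> Y}} {Xh : R -> set X} {Yh : R -> set Y}
  {F : R -> X -> Y} {xt : R -> X}.

Definition discrete_solutions (h0 : R) (xb : R -> X) : Prop :=
  (forall h, 0 < h -> h <= h0 ->
     Xh h (xb h) /\ F h (xb h) = 0 /\
     `|xbar - xb h| <= (1 + 2 / banach_const A) * `|xbar - xt h|
                       + 2 / banach_const A * `|F h (xt h)| /\
     ((banach_const A / 2)%:E <= sur (Xh h) (Yh h) (F h) (xb h))%E) /\
  (is_isomorphism A ->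
     exists h1 r1 : R, 0 < h1 /\ h1 <= h0 /\ 0 < r1 /\
       forall h, 0 < h -> h <= h1 ->
         strongly_metrically_regular (Xh h) (Yh h) (F h) (xb h) /\
         `|xbar - xb h| <= r1 /\
         (forall z, Xh h z -> `|xbar - z| <= r1 -> F h z = 0 -> z = xb h)).

Hypothesis xt_Xh : forall h, 0 < h -> Xh h (xt h).

(* With Y = {0} the Banach constant is 0 (so 2 / banach_const A = 0), every
   F h vanishes and xt itself is a solution. *)
Lemma trivial_range_solutions :
  (forall y : Y, y = 0) -> discrete_solutions 1 xt.
Proof.
move=> Y0; have C0 : banach_const A = 0 := banach_const_trivial Y0.
have xt_metreg h : metreg_const (Xh h) (Yh h) (F h) (xt h) 1.
  split=> //; exists 1; split=> // r x r_gt0 _ Xx _ y _ _ _.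
  by exists x; rewrite subrr normr0 (Y0 y) (Y0 (F h x)) ltW.
split=> [h h_gt0 _|[B [_ [AB _]]]].
  rewrite C0 invr0 mulr0 addr0 mul0r addr0 mul1r mul0r.
  split; first exact: xt_Xh.
  split; first exact: Y0.
  split=> //; apply: le_trans (_ : 1%:E <= _)%E; first by rewrite lee_fin.
  by apply: ereal_sup_ubound; exists 1 => //; exact: xt_metreg.
have X0 (x : X) : x = 0 by rewrite -(AB x) (Y0 (A x)) -(Y0 (A 0)) AB.
exists 1, 1; do 3!split=> //; move=> h h_gt0 _; split.
  split; first by exists 1; exact: xt_metreg.
  exists setT, setT; split; first exact: filterT.
  split=> [|y _ _]; first exact: filterT.
  exists (xt h); split; last by move=> x' _; rewrite (X0 x') (X0 (xt h)).
  by rewrite (Y0 y) (Y0 (F h _)); split; split=> //; exact: xt_Xh.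
rewrite (X0 xbar) (X0 (xt h)) subrr normr0.
by split=> // z _ _ _; rewrite (X0 z).
Qed.

Context {Ah : R -> X -> Y} {R0 : R} {c : R -> R -> R}
  {Ahat : R -> {linear X -> Y}}.
Hypotheses (A_cont : continuous A) (A_surj : forall y, exists x, A x = y)
  (Xh_sub : forall h, 0 < h -> closed_subspace (Xh h))
  (Yh_sub : forall h, 0 < h -> closed_subspace (Yh h))
  (F_cont : forall h, 0 < h -> {within Xh h, continuous F h})
  (F_Yh : forall h, 0 < h -> forall x, Xh h x -> Yh h (F h x))
  (xt_cvg : (`|F h (xt h)| + `|xbar - xt h|) @[h --> 0^'+] --> (0 : R))
  (Ah_op : forall h, 0 < h -> sub_op (Xh h) (Yh h) (Ah h)) (R0_gt0 : 0 < R0)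
  (c_lim : forall e : R, 0 < e -> exists d : R, 0 < d /\
     forall h r, 0 < h -> h < d -> 0 < r -> r < d -> c h r < e)
  (F_approx : forall h r, 0 < h -> 0 < r -> r < R0 ->
     forall x y, Xh h x -> `|x - xt h| <= r -> Xh h y -> `|y - xt h| <= r ->
     `|F h x - F h y - Ah h (x - y)| <= c h r * `|x - y|)
  (Ahat_cont : forall h, 0 < h -> continuous (Ahat h))
  (Ahat_Xh : forall h, 0 < h -> forall x, Yh h (Ahat h x) -> Xh h x)
  (A_Ahat_cvg : opnorm setT (fun x => A x - Ahat h x) @[h --> 0^'+] --> (0 : R))
  (Ah_Ahat_cvg :
     opnorm (Xh h) (fun x => Ah h x - Ahat h x) @[h --> 0^'+] --> (0 : R))
  (Y_nontrivial : exists y0 : Y, y0 != 0).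

Let C := banach_const A.

Lemma perturbation_bound : exists e, 0 < e /\ 16 * e <= C /\
  (is_isomorphism A -> forall u, 8 * e * `|u| <= `|A u|).
Proof.
have C_gt0 : 0 < C := banach_const_gt0 A_cont A_surj Y_nontrivial.
have [k k_gt0 kA] : exists2 k : R, 0 < k &
    is_isomorphism A -> forall u, k * `|u| <= `|A u|.
  have [iso|niso] := pselect (is_isomorphism A); last by exists 1 => // /niso.
  by have [k ? kA] := isomorphism_bounded_below iso; exists k.
exists (Num.min (C / 16) (k / 8)); split; first by rewrite lt_min !divr_gt0.
have := ge_min (C / 16) (C / 16) (k / 8); have := ge_min (k / 8) (C / 16) (k / 8).
rewrite !lexx orbT => /= e_k e_C; split=> [|iso u]; first lra.
apply: le_trans (kA iso u); rewrite ler_wpM2r //; lra.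
Qed.

Lemma eventually_small {e eta} : 0 < e -> 0 < eta -> exists2 h0 : R, 0 < h0 &
  forall h, 0 < h -> h <= h0 ->
    `|opnorm setT (fun x => A x - Ahat h x)| < e /\
    `|opnorm (Xh h) (fun x => Ah h x - Ahat h x)| < e /\
    `|F h (xt h)| < eta /\ `|xbar - xt h| < eta.
Proof.
move=> e_gt0 eta_gt0; apply: near_right0P; near=> h; split; [|split].
- by near: h; exact: (cvgr0_norm_lt _ A_Ahat_cvg).
- by near: h; exact: (cvgr0_norm_lt _ Ah_Ahat_cvg).
- have : `|(`|F h (xt h)| + `|xbar - xt h|)| < eta.
    by near: h; exact: (cvgr0_norm_lt _ xt_cvg).
  rewrite ger0_norm ?addr_ge0 // => small.
  by split; apply: le_lt_trans small; rewrite ?lerDl ?lerDr.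
Unshelve. all: end_near.
Qed.

Lemma level_parameters : exists e rho h1 : R,
  [/\ 0 < e, 16 * e <= C, (is_isomorphism A -> forall u, 8 * e * `|u| <= `|A u|),
      0 < rho < R0 & 0 < h1] /\
  forall h, 0 < h -> h <= h1 ->
    [/\ c h rho <= e, `|opnorm setT (fun x => A x - Ahat h x)| < e,
        `|opnorm (Xh h) (fun x => Ah h x - Ahat h x)| < e &
        2 / C * `|F h (xt h)| <= rho / 4] /\ `|xbar - xt h| <= rho / 4.
Proof.
have C_gt0 : 0 < C := banach_const_gt0 A_cont A_surj Y_nontrivial.
have [e [e_gt0 [eC e_iso]]] := perturbation_bound.
have [d [d_gt0 c_lt]] := c_lim _ e_gt0.
pose rho := Num.min R0 d / 2.
have m_gt0 : 0 < Num.min R0 d by rewrite lt_min R0_gt0.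
have m_R0 : Num.min R0 d <= R0 by rewrite ge_min lexx.
have m_d : Num.min R0 d <= d by rewrite ge_min lexx orbT.
have [rho_gt0 [rho_R0 rho_d]] : 0 < rho /\ rho < R0 /\ rho < d by rewrite /rho; lra.
pose eta := Num.min (rho / 4) (C * rho / 8).
have eta_gt0 : 0 < eta by rewrite lt_min !divr_gt0 ?mulr_gt0.
have eta_rho : eta <= rho / 4 by rewrite ge_min lexx.
have eta_C : 2 / C * eta <= rho / 4.
  rewrite [leRHS](_ : _ = 2 / C * (C * rho / 8)); last by field; rewrite gt_eqF.
  apply: ler_wpM2l; first by rewrite divr_ge0 // ltW.
  by rewrite /eta ge_min lexx orbT.
have [h0 h0_gt0 small] := eventually_small e_gt0 eta_gt0.
pose h1 := Num.min h0 (d / 2).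
have h1_h0 : h1 <= h0 by rewrite ge_min lexx.
have h1_d : h1 <= d / 2 by rewrite ge_min lexx orbT.
exists e, rho, h1; split.
  by split; rewrite ?rho_gt0 ?rho_R0 // lt_min h0_gt0 divr_gt0.
move=> h h_gt0 h_le.
have [|A_Ahat [Ah_Ahat [Fxt xbar_xt]]] := small h h_gt0; first exact: le_trans h1_h0.
split; last exact: le_trans (ltW xbar_xt) eta_rho.
split=> //; first by apply/ltW/c_lt => //; lra.
apply: le_trans eta_C; apply: ler_wpM2l; first by rewrite divr_ge0 // ltW.
exact: ltW.
Qed.

Lemma level_solutions {e rho h1} : 0 < e -> 16 * e <= C -> 0 < rho -> rho < R0 ->
  (forall h, 0 < h -> h <= h1 ->
    [/\ c h rho <= e, `|opnorm setT (fun x => A x - Ahat h x)| < e,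
        `|opnorm (Xh h) (fun x => Ah h x - Ahat h x)| < e &
        2 / C * `|F h (xt h)| <= rho / 4]) ->
  forall h, exists xb, 0 < h -> h <= h1 ->
    Xh h xb /\ F h xb = 0 /\ `|xb - xt h| <= 2 / C * `|F h (xt h)| /\
    metreg_const (Xh h) (Yh h) (F h) xb (C / 2) /\
    ((forall u, 8 * e * `|u| <= `|A u|) ->
       strongly_metrically_regular (Xh h) (Yh h) (F h) xb /\
       forall z, Xh h z -> `|z - xt h| <= rho -> F h z = 0 -> z = xb).
Proof.
move=> e_gt0 eC rho_gt0 rho_R0 small.
have C_gt0 : 0 < C := banach_const_gt0 A_cont A_surj Y_nontrivial.
have A_cover y : exists x, A x = y /\ 3 * C / 4 * `|x| <= `|y|.
  by apply: (banach_const_cover A_cont A_surj Y_nontrivial); rewrite -/C; lra.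
move=> h; have [[h_gt0 h_le]|nh] := pselect (0 < h /\ h <= h1); last first.
  by exists 0 => h_gt0 h_le; case: nh.
have [c_le A_Ahat Ah_Ahat Fxt_small] := small h h_gt0 h_le.
have F_approx_e x y : Xh h x -> `|x - xt h| <= rho -> Xh h y -> `|y - xt h| <= rho ->
    `|F h x - F h y - Ah h (x - y)| <= e * `|x - y|.
  move=> Xx x_near Xy y_near; apply: le_trans (ler_wpM2r (normr_ge0 _) c_le).
  exact: F_approx.
have [xb xbP] := local_solution A_cont (Ahat_cont h h_gt0) (Xh_sub h h_gt0)
  (Yh_sub h h_gt0) (F_cont h h_gt0) (F_Yh h h_gt0) (Ah_op h h_gt0)
  (Ahat_Xh h h_gt0) (xt_Xh h h_gt0) C_gt0 e_gt0 eC rho_gt0 A_cover A_Ahat Ah_Ahat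
  F_approx_e Fxt_small.
by exists xb.
Qed.

Lemma nontrivial_range_solutions :
  exists2 h0, 0 < h0 & exists xb, discrete_solutions h0 xb.
Proof.
have C_gt0 : 0 < C := banach_const_gt0 A_cont A_surj Y_nontrivial.
have [e [rho [h1 [[e_gt0 eC e_iso /andP[rho_gt0 rho_R0] h1_gt0] small]]]] :=
  level_parameters.
have /choice[xb xbP] := level_solutions e_gt0 eC rho_gt0 rho_R0
  (fun h h_gt0 h_le => (small h h_gt0 h_le).1).
exists h1 => //; exists xb; split=> [h h_gt0 h_le|iso]; rewrite -/C.
  have [Xb [Fb [xb_le [metreg _]]]] := xbP h h_gt0 h_le.
  do 2!split=> //; split; last by apply: ereal_sup_ubound; exists (C / 2).
  have := ler_distD (xt h) xbar (xb h); rewrite (distrC (xt h)).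
  have : 0 <= 2 / C * `|xbar - xt h| by rewrite mulr_ge0 // divr_ge0 // ltW.
  rewrite mulrDl mul1r; lra.
exists h1, (rho / 2); do 3!split=> //; first by rewrite divr_gt0.
move=> h h_gt0 h_le; have [[_ _ _ Fxt_small] xbar_xt] := small h h_gt0 h_le.
have [_ [Fb [xb_le [_ /(_ (e_iso iso))[smr uniq]]]]] := xbP h h_gt0 h_le.
have xb_xt : `|xt h - xb h| <= rho / 4 by rewrite distrC; exact: le_trans xb_le _.
split=> //; split.
  by have := ler_distD (xt h) xbar (xb h); lra.
move=> z Xz z_near Fz; apply: uniq => //.
by have := ler_distD xbar z (xt h); rewrite (distrC z xbar); lra.
Qed.

End Discretization.

Theorem mainTheorem3 (R : realType) (X Y : completeNormedModType R)
  (xbar : X) (A : {linear X -> Y})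
  (Xh : R -> set X) (Yh : R -> set Y) (F : R -> X -> Y) (xt : R -> X) :
  continuous A ->
  (forall y : Y, exists x : X, A x = y) ->
  (forall h, 0 < h -> closed_subspace (Xh h)) ->
  (forall h, 0 < h -> closed_subspace (Yh h)) ->
  (forall h, 0 < h -> {within Xh h, continuous F h}) ->
  (forall h, 0 < h -> forall x, Xh h x -> Yh h (F h x)) ->
  (forall h, 0 < h -> Xh h (xt h)) ->
  (* (i) *)
  (`|F h (xt h)| + `|xbar - xt h|) @[h --> 0^'+] --> (0 : R) ->
  (* (ii) *)
  (exists (Ah : R -> X -> Y) (R0 : R) (c : R -> R -> R),
     (forall h, 0 < h -> sub_op (Xh h) (Yh h) (Ah h)) /\
     0 < R0 /\
     (forall h r, 0 < h -> 0 < r -> 0 <= c h r) /\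
     (forall h h' r, 0 < h -> h <= h' -> 0 < r -> c h r <= c h' r) /\
     (forall h r r', 0 < h -> 0 < r -> r <= r' -> c h r <= c h r') /\
     (forall e : R, 0 < e -> exists d : R, 0 < d /\
        forall h r, 0 < h -> h < d -> 0 < r -> r < d -> c h r < e) /\
     (forall h r, 0 < h -> 0 < r -> r < R0 ->
        forall x y, Xh h x -> `|x - xt h| <= r -> Xh h y -> `|y - xt h| <= r ->
        `|F h x - F h y - Ah h (x - y)| <= c h r * `|x - y|) /\
  (* (iii) *)
     (exists Ahat : R -> {linear X -> Y},
        (forall h, 0 < h -> continuous (Ahat h)) /\
        (forall h, 0 < h -> forall x, Xh h x -> Yh h (Ahat h x)) /\
        (forall h, 0 < h -> forall x, Yh h (Ahat h x) -> Xh h x) /\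
        opnorm setT (fun x => A x - Ahat h x) @[h --> 0^'+] --> (0 : R) /\
        opnorm (Xh h) (fun x => Ah h x - Ahat h x) @[h --> 0^'+] --> (0 : R))) ->
  exists (h0 : R) (xb : R -> X), 0 < h0 /\
    (forall h, 0 < h -> h <= h0 ->
       Xh h (xb h) /\ F h (xb h) = 0 /\
       `|xbar - xb h| <= (1 + 2 / banach_const A) * `|xbar - xt h|
                         + 2 / banach_const A * `|F h (xt h)| /\
       ((banach_const A / 2)%:E <= sur (Xh h) (Yh h) (F h) (xb h))%E) /\
    (is_isomorphism A ->
       exists h1 r1 : R, 0 < h1 /\ h1 <= h0 /\ 0 < r1 /\
         forall h, 0 < h -> h <= h1 ->
           strongly_metrically_regular (Xh h) (Yh h) (F h) (xb h) /\
           `|xbar - xb h| <= r1 /\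
           (forall z, Xh h z -> `|xbar - z| <= r1 -> F h z = 0 -> z = xb h)).
Proof.
move=> A_cont A_surj Xh_sub Yh_sub F_cont F_Yh xt_Xh xt_cvg
  [Ah [R0 [c [Ah_op [R0_gt0 [_ [_ [_ [c_lim [F_approx
   [Ahat [Ahat_cont [_ [Ahat_Xh [A_Ahat_cvg Ah_Ahat_cvg]]]]]]]]]]]]]]].
have [Y_nontrivial|Y_trivial] := pselect (exists y0 : Y, y0 != 0).
  have [h0 h0_gt0 [xb sol]] := nontrivial_range_solutions xt_Xh A_cont A_surj
    Xh_sub Yh_sub F_cont F_Yh xt_cvg Ah_op R0_gt0 c_lim F_approx Ahat_cont
    Ahat_Xh A_Ahat_cvg Ah_Ahat_cvg Y_nontrivial.
  by exists h0, xb.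
exists 1, xt; split=> //; apply: trivial_range_solutions => // y.
by apply: contrapT => /eqP y_neq0; apply: Y_trivial; exists y.
Qed.
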